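(* Fix weights $w_1,\dots,w_D>0$. For $n,N\ge 1$ let $Z_{n,N}(w_1,\dots,w_D)=\sum_{\tau}\prod_{e\in\tau}w(e)$, the sum over all perfect matchings $\tau$ of the $N$-fold blow-up $\mathbb T(n,\Lambda)_N$ of the torus $\mathbb T(n,\Lambda)$, where every lift of an edge of type $e_i$ has weight $w_i$. Then $$\lim_{n\to\infty}\lim_{N\to\infty}\frac{1}{Nn^d}\log\frac{Z_{n,N}(w_1,\dots,w_D)}{(N!)^{n^d}}=\log(w_1+\dots+w_D).$$
   Context: $\Lambda$ is a bipartite graph embedded in $\mathbb R^d$ of the following form (or a linear image of one): there are vectors $e_1,\dots,e_D\in\mathbb R^d$ spanning $\mathbb R^d$ with $\sum_{i=1}^D e_i=0$ and a vector $v_0$ with $e_i\in v_0+\mathbb Z^d$ for all $i$; the white vertices are $W=\mathbb Z^d$, the black vertices are $B=\mathbb Z^d+v_0$, and each white vertex $w$ is joined by an edge exactly to the black vertices $w+e_1,\dots,w+e_D$; $\Lambda$ is connected. An edge from $w$ to $w+e_i$ is said to be of type $e_i$. The torus $\mathbb T(n,\Lambda)=\Lambda/n\mathbb Z^d$ has $n^d$ white and $n^d$ black vertices and every vertex has degree $D$. The $N$-fold blow-up $G_N$ of a graph $G$ replaces every vertex by $N$ copies (lifts) and every edge $(u,v)$ by the complete bipartite graph between the lifts of $u$ and the lifts of $v$. *)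

From HB Require Import structures.
From Stdlib Require Import Relations.Relation_Operators.
From mathcomp Require Import all_boot all_order all_algebra.
From mathcomp Require Import all_classical all_reals all_analysis.
Set Implicit Arguments. Unset Strict Implicit. Unset Printing Implicit Defensive.
Import Order.TTheory GRing.Theory Num.Theory.
Local Open Scope ring_scope.

(* Combinatorial data of the lattice Lambda: e_i = v0 + a_i with a_i in Z^d.
   White vertices: Z^d (point z).  Black vertices: Z^d + v0, the black vertex
   z + v0 being encoded by z.  White z is joined to black z + a_i, i.e. to the
   point z + e_i. *)

Definition evec (R : realType) (d D : nat) (v0 : 'rV[R]_d)
  (a : 'I_D -> 'rV[int]_d) (i : 'I_D) : 'rV[R]_d :=
  v0 + map_mx (fun z : int => z%:~R) (a i).

(* vertices of Lambda: inl = white, inr = black *)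
Definition Lvert (d : nat) := ('rV[int]_d + 'rV[int]_d)%type.

Definition Ladj (d D : nat) (a : 'I_D -> 'rV[int]_d) (x y : Lvert d) : Prop :=
  match x, y with
  | inl w, inr b => exists i, b = w + a i
  | inr b, inl w => exists i, b = w + a i
  | _, _ => False
  end.

Definition Lconnected (d D : nat) (a : 'I_D -> 'rV[int]_d) : Prop :=
  forall x y : Lvert d, clos_refl_sym_trans (Lvert d) (Ladj a) x y.

(* Torus T(n, Lambda) for n >= 1: vertex classes Z^d / n Z^d, encoded as
   functions 'I_d -> 'I_n (written 'I_(n.-1.+1), which is 'I_n for n >= 1). *)
Definition tvert (n d : nat) := {ffun 'I_d -> 'I_(n.-1.+1)}.

Definition tshift (n d : nat) (x : tvert n d) (z : 'rV[int]_d) : tvert n d :=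
  [ffun k => inord (absz (((x k)%:Z + z ord0 k) %% (n.-1.+1)%:Z)%Z)].

(* A perfect matching chooses, for each lift (x, k) of
   the white vertex x, an edge type i and a lift l of the black vertex
   x + a_i (the edge ((x,k),(x+a_i,l)) of type i), such that every lift of
   every black vertex is used exactly once (the induced map is injective,
   hence bijective between equinumerous finite sets). *)
Definition Zpart (R : realType) (d D : nat) (a : 'I_D -> 'rV[int]_d)
  (w : 'I_D -> R) (n N : nat) : R :=
  \sum_(f : {ffun (tvert n d * 'I_N) -> ('I_D * 'I_N)} |
         injectiveb (fun p : tvert n d * 'I_N =>
                       (tshift p.1 (a (f p).1), (f p).2)))
     \prod_(p : tvert n d * 'I_N) w (f p).1.

Definition free_energy (R : realType) (d D : nat) (a : 'I_D -> 'rV[int]_d)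
  (w : 'I_D -> R) (n N : nat) : R :=
  ln (Zpart a w n N / (N`!%:R ^+ (n ^ d))) / (N * n ^ d)%:R.

From HB Require Import structures.
From Stdlib Require Import Relations.Relation_Operators.
From mathcomp Require Import all_boot all_order all_algebra all_fingroup.
From mathcomp Require Import all_classical all_reals all_analysis.
From mathcomp Require Import zify.
Set Implicit Arguments.
Unset Strict Implicit.
Unset Printing Implicit Defensive.
Import Order.TTheory GRing.Theory Num.Theory.
Import numFieldNormedType.Exports.
Local Open Scope ring_scope.

(* Upper bound: a perfect matching of the blow-up is determined by its edge
   types together with, at each black vertex, the bijection between the N
   white lifts matched into it and its N lifts; hence
   Z <= (N!)^(n^d) (w_1 + ... + w_D)^(N n^d).
   Lower bound: some type composition c (how many of the N lifts of a white
   vertex use each edge type) carries at least a (N+1)^-D share of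
   (w_1 + ... + w_D)^N.  If every white vertex has composition c, every black
   vertex receives exactly N edges, which can be relabelled by an arbitrary
   permutation of its lifts; hence
   Z >= (N! (w_1 + ... + w_D)^N / (N+1)^D)^(n^d).
   So the free energy lies between log(w_1 + ... + w_D) - D log(N+1)/N and
   log(w_1 + ... + w_D), whatever n. *)

Lemma ler_sum_subset (R : numDomainType) (T : finType) (A B : {pred T})
    (F : T -> R) :
  (forall x, 0 <= F x) -> {subset A <= B} ->
  \sum_(x in A) F x <= \sum_(x in B) F x.
Proof.
move=> F_ge0 sAB; rewrite [X in _ <= X](bigID (mem A)) /=.
rewrite [X in _ <= X + _](eq_bigl (mem A)) => [|x].
  by rewrite lerDl sumr_ge0.
by rewrite andb_idl // => /sAB.
Qed.

Lemma sum_injectiveb_ffun (R : pzSemiRingType) (T : finType) :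
  \sum_(h : {ffun T -> T}) (injectiveb h)%:R = (#|T|)`!%:R :> R.
Proof.
rewrite (bigID (fun h : {ffun T -> T} => injectiveb h)) /=.
rewrite [X in _ + X]big1 => [|h /negbTE -> //].
rewrite addr0 (eq_bigr (fun=> 1)) => [|h ->] //.
rewrite sumr_const -[(#|T|)`!]ffactnn -card_inj_ffuns.
by congr _%:R; apply: eq_card => h; rewrite inE.
Qed.

Lemma exists_ge_average (R : realFieldType) (I : finType) (F : I -> R) :
  (0 < #|I|)%N -> exists i, \sum_j F j <= #|I|%:R * F i.
Proof.
case/card_gt0P => i0 _; exists [arg max_(i > i0) F i]%O.
case: arg_maxP => // i _ i_max.
by rewrite mulr_natl -sumr_const ler_sum // => j _; apply: i_max.
Qed.

Definition type_count (N D : nat) (s : {ffun 'I_N -> 'I_D}) :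
  {ffun 'I_D -> 'I_N.+1} :=
  [ffun i => inord (count_mem i (codom s))].

Lemma type_count_perm (N D : nat) (s s0 : {ffun 'I_N -> 'I_D}) :
  type_count s = type_count s0 -> exists r : 'S_N, forall k, s k = s0 (r k).
Proof.
move=> count_eq.
have count_memE i : count_mem i (codom s) = count_mem i (codom s0).
  have := congr1 (fun c : {ffun 'I_D -> 'I_N.+1} => c i) count_eq.
  have count_le (t : {ffun 'I_N -> 'I_D}) : (count_mem i (codom t) < N.+1)%N.
    by rewrite ltnS (leq_trans (count_size _ _)) // size_codom card_ord.
  by rewrite !ffunE => /(congr1 (@nat_of_ord _)); rewrite !inordK.
have /tuple_permP[r codom_eq] : perm_eq (codom s) [tuple s0 k | k < N].
  by apply/allP => i _; rewrite /= count_memE.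
exists r => k.
have : map s (enum 'I_N) = map (fun i => s0 (r i)) (enum 'I_N).
  rewrite -[LHS]/(codom s) codom_eq /=.
  by apply: eq_map => i; rewrite tnth_mktuple.
by move/eq_in_map => /(_ k); rewrite mem_enum => ->.
Qed.

Section BlowupMatchings.

Variables (X : finType) (D N : nat) (sh : 'I_D -> X -> X).

Local Notation lift := (X * 'I_N)%type.
Local Notation edge_choice := {ffun lift -> 'I_D * 'I_N}.

Definition matched_lift (f : edge_choice) (p : lift) :=
  (sh (f p).1 p.1, (f p).2).

Definition perfect_matching (f : edge_choice) := injectiveb (matched_lift f).

Definition fiber (f : edge_choice) (y : X) : {set lift} :=
  [set p | sh (f p).1 p.1 == y].

Lemma card_fiber f y : perfect_matching f -> #|fiber f y| = N.
Proof.
move/injectiveP=> f_inj.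
have -> : fiber f y = matched_lift f @^-1: finset.setX [set y] [set: 'I_N].
  by apply/setP => p; rewrite !inE andbT.
by rewrite card_preimset // cardsX cards1 cardsT card_ord mul1n.
Qed.

Definition fiber_labels (f : edge_choice) : {ffun X -> {ffun 'I_N -> 'I_N}} :=
  [ffun y => [ffun j => (f (nth (y, j) (enum (fiber f y)) j)).2]].

Lemma fiber_labels_injective f y :
  perfect_matching f -> injectiveb (fiber_labels f y).
Proof.
move=> fM; apply/injectiveP => j1 j2; rewrite !ffunE.
have size_fiber : size (enum (fiber f y)) = N by rewrite -cardE card_fiber.
have in_fiber j : nth (y, j) (enum (fiber f y)) j \in fiber f y.
  by rewrite -mem_enum mem_nth // size_fiber.
move: (in_fiber j1) (in_fiber j2); rewrite !inE => /eqP e1 /eqP e2 e12.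
have := injectiveP _ fM _ _ (f_equal2 pair (etrans e1 (esym e2)) e12).
rewrite (set_nth_default (y, j1) (y, j2)) ?size_fiber //.
by move/eqP; rewrite nth_uniq ?size_fiber ?enum_uniq // => /eqP/val_inj.
Qed.

Definition edge_types (f : edge_choice) : {ffun lift -> 'I_D} :=
  [ffun p => (f p).1].

Lemma matching_code_inj :
  {in perfect_matching &, injective (fun f => (edge_types f, fiber_labels f))}.
Proof.
move=> f f' fM f'M [/ffunP types_eq labels_eq].
have type_eq p : (f p).1 = (f' p).1 by have := types_eq p; rewrite !ffunE.
have fiber_eq y : fiber f y = fiber f' y.
  by apply/setP => p; rewrite !inE type_eq.
apply/ffunP => p; set y := sh (f p).1 p.1.
have p_in : p \in enum (fiber f y) by rewrite mem_enum inE.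
have ltpN : (index p (enum (fiber f y)) < N)%N.
  by move: p_in; rewrite -index_mem -cardE card_fiber.
move/ffunP/(_ y)/ffunP/(_ (Ordinal ltpN)): labels_eq.
rewrite !ffunE /= -fiber_eq !nth_index //.
by case: (f p) (f' p) (type_eq p) => [i l] [i' l'] /= -> ->.
Qed.

Hypothesis sh_inj : forall i, injective (sh i).

Section Gluing.

Variable s0 : {ffun 'I_N -> 'I_D}.

Definition sort_perm (s : {ffun 'I_N -> 'I_D}) : 'S_N :=
  odflt 1%g [pick r : 'S_N | [forall k, s k == s0 (r k)]].

Lemma sort_permE s :
  type_count s = type_count s0 -> forall k, s k = s0 (sort_perm s k).
Proof.
move=> /type_count_perm[r r_sorts]; rewrite /sort_perm.
case: pickP => [r' /forallP r'_sorts k | no_r]; first exact/eqP/r'_sorts.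
by case/negP: (negbT (no_r r)); apply/forallP => k; apply/eqP.
Qed.

Definition glue_ok (g : {ffun X -> {ffun 'I_N -> 'I_D} * 'S_N}) :=
  [forall x, type_count (g x).1 == type_count s0].

(* Every white x uses the types s0, reordered by sort_perm; the edge entering
   a black y that comes from slot j of s0 is sent to lift (g y).2 j, so each
   lift of y is hit exactly once. *)
Definition glue (g : {ffun X -> {ffun 'I_N -> 'I_D} * 'S_N}) : edge_choice :=
  [ffun p => ((g p.1).1 p.2,
              (g (sh ((g p.1).1 p.2) p.1)).2 (sort_perm (g p.1).1 p.2))].

Lemma glue_perfect g : glue_ok g -> perfect_matching (glue g).
Proof.
move=> /forallP g_ok; apply/injectiveP => -[x k] [x' k'].
rewrite /matched_lift !ffunE /= => -[y_eq]; rewrite y_eq => /perm_inj sort_eq.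
have type_eq : (g x).1 k = (g x').1 k'.
  by rewrite (sort_permE (eqP (g_ok x))) (sort_permE (eqP (g_ok x'))) sort_eq.
rewrite type_eq in y_eq; have x_eq := sh_inj y_eq; subst x'.
by rewrite (perm_inj sort_eq).
Qed.

Lemma glue_inj : {in glue_ok &, injective glue}.
Proof.
move=> g g' /forallP g_ok _ /ffunP glue_eq.
have types_eq x : (g x).1 = (g' x).1.
  by apply/ffunP => k; have := glue_eq (x, k); rewrite !ffunE => -[].
have perms_eq y : (g y).2 = (g' y).2.
  apply/permP => j; have [sh_inv _ sh_invK] := injF_bij (@sh_inj (s0 j)).
  set x := sh_inv y; set k := ((sort_perm (g x).1)^-1)%g j.
  have type_k : (g x).1 k = s0 j by rewrite (sort_permE (eqP (g_ok x))) permKV.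
  have := glue_eq (x, k); rewrite !ffunE /= -types_eq type_k sh_invK permKV.
  by case.
by apply/ffunP => x; rewrite [g x]surjective_pairing [g' x]surjective_pairing
  types_eq perms_eq.
Qed.

End Gluing.

Section Weights.

Variables (R : numDomainType) (w : 'I_D -> R).
Hypothesis w_ge0 : forall i, 0 <= w i.

Definition blowup_partition : R :=
  \sum_(f : edge_choice | perfect_matching f) \prod_p w (f p).1.

Lemma blowup_partition_le :
  blowup_partition <= N`!%:R ^+ #|X| * (\sum_i w i) ^+ (#|X| * N).
Proof.
pose G (q : {ffun lift -> 'I_D} * {ffun X -> {ffun 'I_N -> 'I_N}}) : R :=
  (\prod_p w (q.1 p)) * \prod_y (injectiveb (q.2 y))%:R.
have G_ge0 q : 0 <= G q by rewrite mulr_ge0 ?prodr_ge0.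
have G_code f : perfect_matching f ->
    G (edge_types f, fiber_labels f) = \prod_p w (f p).1.
  move=> fM; rewrite /G [X in _ * X]big1 => [|y _].
    by rewrite mulr1; apply: eq_bigr => p _; rewrite ffunE.
  by rewrite /= fiber_labels_injective.
have -> : blowup_partition =
    \sum_(q in [set (edge_types f, fiber_labels f) | f in perfect_matching])
      G q.
  rewrite big_imset /=; last exact: matching_code_inj.
  by apply: eq_big => // f fM; rewrite G_code.
apply: le_trans (ler_sum_subset (B := predT) G_ge0 _) _ => //.
rewrite -(pair_bigA _ (fun t h => G (t, h))) /= /G /=.
under eq_bigr do rewrite -mulr_sumr.
rewrite -mulr_suml mulrC.
rewrite -(bigA_distr_bigA (fun (p : lift) (i : 'I_D) => w i)).
rewrite -(bigA_distr_bigA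
  (fun (y : X) (h : {ffun 'I_N -> 'I_N}) => (injectiveb h)%:R)).
by rewrite /= sum_injectiveb_ffun card_ord !prodr_const card_prod card_ord.
Qed.

Lemma blowup_partition_ge_type_class (s0 : {ffun 'I_N -> 'I_D}) :
  (N`!%:R * \sum_(s | type_count s == type_count s0) \prod_k w (s k)) ^+ #|X|
    <= blowup_partition.
Proof.
pose F (u : {ffun 'I_N -> 'I_D} * 'S_N) : R :=
  (type_count u.1 == type_count s0)%:R * \prod_k w (u.1 k).
have sumF : \sum_u F u =
    N`!%:R * \sum_(s | type_count s == type_count s0) \prod_k w (s k).
  rewrite -(pair_bigA _ (fun s r => F (s, r))) /= /F /=.
  under eq_bigr do rewrite sumr_const card_Sn.
  rewrite sumrMnl mulr_natl [in RHS]big_mkcond /=; congr (_ *+ _).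
  by apply: eq_bigr => s _; case: eqP; rewrite ?mul1r ?mul0r.
have glue_weight : \sum_(g : {ffun X -> _}) \prod_x F (g x) =
    \sum_(g in glue_ok s0) \prod_p w (glue s0 g p).1.
  rewrite [RHS]big_mkcond /=; apply: eq_bigr => g _.
  case: ifPn => [/forallP g_ok | /forallPn[x bad_x]].
    under [RHS]eq_bigr do rewrite ffunE /=.
    rewrite -(pair_bigA _ (fun x k => w ((g x).1 k))) /=.
    by apply: eq_bigr => x _; rewrite /F (eqP (g_ok x)) eqxx mul1r.
  by rewrite (bigD1 x) //= /F (negbTE bad_x) !mul0r.
rewrite -sumF -prodr_const bigA_distr_bigA /= glue_weight.
rewrite -(big_imset (fun f : edge_choice => \prod_p w (f p).1) (@glue_inj s0)).

apply: ler_sum_subset => [f | _ /imsetP[g g_ok ->]]; first exact: prodr_ge0.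
exact: glue_perfect.
Qed.

End Weights.

Lemma blowup_partition_ge (R : realFieldType) (w : 'I_D -> R) :
  (forall i, 0 <= w i) -> 0 < \sum_i w i ->
  (N`!%:R * ((\sum_i w i) ^+ N / (N.+1)%:R ^+ D)) ^+ #|X|
    <= blowup_partition w.
Proof.
move=> w_ge0 S_gt0; have S_ge0 := ltW S_gt0.
pose W (c : {ffun 'I_D -> 'I_N.+1}) :=
  \sum_(s | type_count s == c) \prod_k w (s k).
have sum_W : (\sum_i w i) ^+ N = \sum_c W c.
  rewrite -[in LHS](card_ord N) -prodr_const bigA_distr_bigA /=.
  exact: partition_big.
have K_gt0 : (0 : R) < (N.+1)%:R ^+ D by rewrite exprn_gt0 ?ltr0n.
have [c le_W] : exists c, (\sum_i w i) ^+ N <= (N.+1)%:R ^+ D * W c.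
  have := @exists_ge_average R _ W.
  by rewrite sum_W card_ffun !card_ord natrX expn_gt0; apply.
have W_gt0 : 0 < W c.
  by rewrite -(pmulr_rgt0 _ K_gt0) (lt_le_trans _ le_W) ?exprn_gt0.
have [s0 /eqP s0_c] : exists s0, type_count s0 == c.
  case: (pickP (fun s => type_count s == c)) => [s0 | none]; first by exists s0.
  by move: W_gt0; rewrite /W big_pred0 ?ltxx.
apply: le_trans (blowup_partition_ge_type_class w_ge0 s0).
rewrite s0_c; apply: lerXn2r; rewrite ?nnegrE.
- by rewrite mulr_ge0 ?divr_ge0 ?exprn_ge0.
- by rewrite mulr_ge0 // ltW.
- by rewrite ler_pM2l ?ltr0n ?fact_gt0 // ler_pdivrMr // mulrC.
Qed.

End BlowupMatchings.

Local Open Scope classical_set_scope.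

Section LnGrowth.

Variable R : realType.

Lemma ln_le_two_sqrt (y : R) : 0 < y -> ln y <= 2 * Num.sqrt y.
Proof.
move=> y_gt0; have sqrt_gt0 : 0 < Num.sqrt y by rewrite sqrtr_gt0.
rewrite -{1}(sqr_sqrtr (ltW y_gt0)) lnXn // mulr_natl mulr2n.
by rewrite lerD // ltW // ln_sublinear.
Qed.

Lemma ln_succ_div_le (N : nat) :
  (0 < N)%N -> ln (N.+1%:R : R) / N%:R <= 4 * Num.sqrt (harmonic N).
Proof.
move=> N_gt0; set s := Num.sqrt (N.+1%:R : R).
have s_gt0 : 0 < s by rewrite sqrtr_gt0 ltr0n.
have s_sq : s ^+ 2 = N.+1%:R by rewrite sqr_sqrtr.
have -> : Num.sqrt (harmonic N) = s^-1 by rewrite /= sqrtrV.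
rewrite ler_pdivrMr ?ltr0n //.
apply: le_trans (ln_le_two_sqrt _) _; first by rewrite ltr0n.
rewrite -/s -(ler_pM2r s_gt0) [X in _ <= X]mulrAC divfK ?gt_eqF //.
rewrite -mulrA -expr2 s_sq.
by rewrite -!natrM ler_nat; lia.
Qed.

Lemma cvg_ln_succ_div : (fun N => ln (N.+1%:R : R) / N%:R) @ \oo --> 0.
Proof.
apply: (squeeze_cvgr (f := fun=> 0)
  (h := fun N => 4 * Num.sqrt (harmonic N))).
- near=> N; rewrite divr_ge0 ?ln_ge0 ?ler1n //=.
  by apply: ln_succ_div_le; near: N; exists 1%N.
- exact: cvg_cst.
- rewrite -(mulr0 4) -sqrtr0; apply: cvgM; first exact: cvg_cst.
  exact: (cvg_comp _ _ cvg_harmonic (@sqrt_continuous R 0)).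
Unshelve. all: by end_near.
Qed.

End LnGrowth.

Lemma Lconnected_gt0 (d D : nat) (a : 'I_D -> 'rV[int]_d) :
  Lconnected a -> (0 < D)%N.
Proof.
case: D a => // a /(_ (inl 0) (inr 0)) conn; exfalso.
suff /(_ _ _ conn) : forall x y,
  clos_refl_sym_trans _ (Ladj a) x y -> x = y by [].
move=> x y; elim=> [{}x {}y | // | {}x {}y _ -> // | {}x {}y z _ -> _ -> //].
by case: x y => ? [] ? //= [[]].
Qed.

Lemma tshift_val (n d : nat) (x : tvert n d) (z : 'rV[int]_d) k :
  (tshift x z k)%:Z = (((x k)%:Z + z ord0 k) %% (n.-1.+1)%:Z)%Z.
Proof.
have mod_ge0 : (0 <= ((x k)%:Z + z ord0 k) %% (n.-1.+1)%:Z)%Z.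
  by rewrite modz_ge0.
rewrite ffunE inordK; first by rewrite gez0_abs.
by rewrite -ltz_nat gez0_abs // ltz_pmod.
Qed.

Lemma tshiftK (n d : nat) (z : 'rV[int]_d) :
  cancel (fun x : tvert n d => tshift x z) (fun x => tshift x (- z)).
Proof.
move=> x; apply/ffunP => k; apply/ord_inj/eqP.
by rewrite -eqz_nat !tshift_val modzDml mxE addrK modz_small ?ltz_nat ?ltn_ord.
Qed.

Lemma card_tvert (n d : nat) : (0 < n)%N -> #|{: tvert n d}| = (n ^ d)%N.
Proof. by move=> n_gt0; rewrite card_ffun !card_ord prednK. Qed.

Lemma ln_root_bounds (R : realType) (x y Q : R) (V : nat) :
  (0 < V)%N -> 0 < x -> 0 < y -> x ^+ V <= Q <= y ^+ V ->
  ln x <= ln Q / V%:R <= ln y.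
Proof.
move=> V_gt0 x_gt0 y_gt0 /andP[lo hi].
have Q_gt0 : 0 < Q by apply: lt_le_trans lo; rewrite exprn_gt0.
rewrite ler_pdivlMr ?ler_pdivrMr ?ltr0n // !mulr_natr -!lnXn //.
by rewrite !ler_ln ?posrE ?exprn_gt0 ?lo.
Qed.

Lemma free_energy_bounds (R : realType) (d D : nat) (a : 'I_D -> 'rV[int]_d)
    (w : 'I_D -> R) (n N : nat) :
  (0 < n)%N -> (0 < N)%N -> (0 < D)%N -> (forall i, 0 < w i) ->
  ln (\sum_i w i) - D%:R * (ln N.+1%:R / N%:R) <= free_energy a w n N
    <= ln (\sum_i w i).
Proof.
move=> n_gt0 N_gt0 D_gt0 w_gt0; set S := \sum_i w i.
have w_ge0 i : 0 <= w i := ltW (w_gt0 i).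
have S_gt0 : 0 < S.
  apply: lt_le_trans (w_gt0 (Ordinal D_gt0)) _.
  by rewrite /S (bigD1 (Ordinal D_gt0)) //= lerDl sumr_ge0.
set V := (n ^ d)%N; have V_gt0 : (0 < V)%N by rewrite expn_gt0 n_gt0.
pose sh i (x : tvert n d) := tshift x (a i).
have sh_inj i : injective (sh i) := can_inj (tshiftK (n := n) (a i)).
have Z_eq : Zpart a w n N = blowup_partition N sh w by [].
have Z_le := blowup_partition_le N sh w_ge0.
have Z_ge := blowup_partition_ge N sh_inj w_ge0 S_gt0.
rewrite -Z_eq card_tvert // -/V -/S in Z_le Z_ge.
set x := S ^+ N / N.+1%:R ^+ D.
have x_gt0 : 0 < x by rewrite divr_gt0 ?exprn_gt0 ?ltr0n.
have fact_gt0 : (0 : R) < N`!%:R ^+ V by rewrite exprn_gt0 ?ltr0n ?fact_gt0.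
have Q_bounds : x ^+ V <= Zpart a w n N / N`!%:R ^+ V <= (S ^+ N) ^+ V.
  rewrite ler_pdivlMr // ler_pdivrMr // -exprMn mulrC Z_ge /=.
  by rewrite -exprM mulnC mulrC.
have /andP[lo hi] := ln_root_bounds V_gt0 x_gt0 (exprn_gt0 N S_gt0) Q_bounds.
have -> : free_energy a w n N =
    ln (Zpart a w n N / N`!%:R ^+ V) / V%:R / N%:R.
  by rewrite /free_energy -/V natrM invfM mulrA [LHS]mulrAC.
have N_gt0' : (0 : R) < N%:R by rewrite ltr0n.
apply/andP; split.
- have -> : ln S - D%:R * (ln N.+1%:R / N%:R) = ln x / N%:R.
    rewrite ln_div ?posrE ?exprn_gt0 ?ltr0n // !lnXn ?ltr0n //.
    by rewrite mulrBl -[ln S *+ N]mulr_natr mulfK ?gt_eqF // mulr_natl mulrnAl.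
  by rewrite ler_pM2r ?invr_gt0.
- rewrite -[ln S](mulfK (lt0r_neq0 N_gt0')) mulr_natr -lnXn //.
  by rewrite ler_pM2r ?invr_gt0.
Qed.

Theorem mainTheorem1 (R : realType) (d D : nat) (v0 : 'rV[R]_d)
  (a : 'I_D -> 'rV[int]_d) (w : 'I_D -> R)
  (ha_inj : injective a)
  (hsum : \sum_(i < D) evec v0 a i = 0)
  (hspan : row_full (\matrix_(i < D) evec v0 a i))
  (hconn : Lconnected a)
  (hw : forall i, 0 < w i) :
  exists L : nat -> R,
    (forall n : nat, (0 < n)%N ->
       (fun N : nat => free_energy a w n N) @ \oo --> L n) /\
    L @ \oo --> ln (\sum_(i < D) w i).
Proof.
exists (fun=> ln (\sum_i w i)); split=> [n n_gt0|]; last exact: cvg_cst.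
have D_gt0 := Lconnected_gt0 hconn.
apply: (squeeze_cvgr
  (f := fun N => ln (\sum_i w i) - D%:R * (ln N.+1%:R / N%:R))
  (h := fun=> ln (\sum_i w i))).
- near=> N; apply: free_energy_bounds => //.
  by near: N; exists 1%N.
- rewrite -[X in _ --> X]subr0 -(mulr0 D%:R).
  apply: cvgB; first exact: cvg_cst.
  by apply: cvgM; [exact: cvg_cst | exact: cvg_ln_succ_div].
- exact: cvg_cst.
Unshelve. all: by end_near.
Qed.
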